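(* Let $(\mathfrak g,[\cdot,\cdot]_{\mathfrak g},E,S)$ be a quadratic ENL algebra and $K:\mathfrak g^*\to\mathfrak g$ a linear map. Then $K$ is an ENE-relative Rota–Baxter operator on $(\mathfrak g,[\cdot,\cdot]_{\mathfrak g},E)$ with respect to the coadjoint ENE-representation $(\mathfrak g^*;E^*,\mathrm{ad}^* )$ if and only if $B:=K\circ S^\sharp:\mathfrak g\to\mathfrak g$ is a Rota–Baxter operator of weight $0$ on the ENL algebra $(\mathfrak g,[\cdot,\cdot]_{\mathfrak g},E)$, i.e. $[Bx,By]_{\mathfrak g}=B([Bx,y]_{\mathfrak g}+[x,By]_{\mathfrak g})$ for all $x,y$ and $E\circ B=B\circ E$.
   Context: Vector spaces are finite-dimensional over an algebraically closed field of characteristic zero. An ENL algebra is a Lie algebra with linear $E$ satisfying $E[x,y]=[x,Ey]$ for all $x,y$. A quadratic ENL algebra $(\mathfrak g,E,S)$ is an ENL algebra with nondegenerate symmetric bilinear form $S$ such that $S([x,y],z)+S(y,[x,z])=0$ and $S(Ex,y)=S(x,Ey)$; $S^\sharp:\mathfrak g\to\mathfrak g^*$ is $\langle S^\sharp x,y\rangle=S(x,y)$. Coadjoint: $\langle\mathrm{ad}^*_x\xi,y\rangle=-\langle\xi,[x,y]\rangle$, $E^*$ the dual map. An ENE-relative Rota–Baxter operator with respect to $(\mathfrak g^*;E^*,\mathrm{ad}^* )$ is a linear $K:\mathfrak g^*\to\mathfrak g$ with $[K\xi,K\eta]_{\mathfrak g}=K(\mathrm{ad}^*_{K\xi}\eta-\mathrm{ad}^*_{K\eta}\xi)$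 for all $\xi,\eta$ and $E\circ K=K\circ E^*$. *)

From HB Require Import structures.
From mathcomp Require Import all_boot all_algebra all_field.
Set Implicit Arguments. Unset Strict Implicit. Unset Printing Implicit Defensive.
Import GRing.Theory.
Local Open Scope ring_scope.

(* Finite-dimensional vector spaces over F are modelled by [vectType F];
   the dual g^* of g is the space of linear forms 'Hom(g, GRing.regular F). *)
Section ENL.
Variables (F : fieldType) (V : vectType F).

Definition dualv := 'Hom(V, GRing.regular F).

Definition is_lie_bracket (br : V -> V -> V) : Prop :=
  [/\ (forall a x y z, br (a *: x + y) z = a *: br x z + br y z),
      (forall a x y z, br z (a *: x + y) = a *: br z x + br z y),
      (forall x, br x x = 0) &
      (forall x y z, br x (br y z) + br y (br z x) + br z (br x y) = 0)].

Definition is_ENL (br : V -> V -> V) (E : 'End(V)) : Prop :=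
  is_lie_bracket br /\ (forall x y, E (br x y) = br x (E y)).

Definition is_quadratic_ENL (br : V -> V -> V) (E : 'End(V)) (S : V -> V -> F)
  : Prop :=
  is_ENL br E /\
  [/\ (forall a x y z, S (a *: x + y) z = a * S x z + S y z),
      (forall x y, S x y = S y x),
      (forall x, (forall y, S x y = 0) -> x = 0),
      (forall x y z, S (br x y) z + S y (br x z) = 0) &
      (forall x y, S (E x) y = S x (E y))].

Definition Ssharp (S : V -> V -> F) (x : V) : dualv := linfun (fun y : V => (S x y : GRing.regular F)).

Definition coad (br : V -> V -> V) (x : V) (xi : dualv) : dualv :=
  linfun (fun y : V => - xi (br x y)).

Definition dualmap (E : 'End(V)) (xi : dualv) : dualv := comp_lfun xi E.

Definition is_ENE_relRB_coad (br : V -> V -> V) (E : 'End(V)) (K : 'Hom(dualv, V))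
  : Prop :=
  (forall xi eta : dualv,
      br (K xi) (K eta) = K (coad br (K xi) eta - coad br (K eta) xi)) /\
  (forall xi, E (K xi) = K (dualmap E xi)).

Definition is_RB0_ENL (br : V -> V -> V) (E : 'End(V)) (B : V -> V) : Prop :=
  (forall x y, br (B x) (B y) = B (br (B x) y + br x (B y))) /\
  (forall x, E (B x) = B (E x)).

End ENL.

(* S^sharp is a linear isomorphism g -> g^* (nondegeneracy and dim g^* = dim g).
   Invariance of S says exactly that it intertwines the adjoint and coadjoint
   actions, ad^*_u (S^sharp y) = S^sharp [u, y], and self-adjointness of E says
   E^* S^sharp = S^sharp E.  Substituting xi = S^sharp x, eta = S^sharp y and
   using antisymmetry of the bracket, the two defining identities of K become
   those of B = K S^sharp. *)
From HB Require Import structures.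
From mathcomp Require Import all_boot all_algebra all_field.
Set Implicit Arguments. Unset Strict Implicit. Unset Printing Implicit Defensive.
Import GRing.Theory.
Local Open Scope ring_scope.

Lemma linfunE_linear (F : fieldType) (aT rT : vectType F) (f : aT -> rT) :
  (forall a x y, f (a *: x + y) = a *: f x + f y) -> forall x, linfun f x = f x.
Proof.
move=> f_lin x.
pose fL : {linear aT -> rT} := HB.pack f (GRing.isLinear.Build F aT rT _ f f_lin).
exact: (lfunE fL x).
Qed.

Lemma lie_bracket_anti (F : fieldType) (V : vectType F) (br : V -> V -> V) :
  is_lie_bracket br -> forall x y, br y x = - br x y.
Proof.
case=> br_linl br_linr br_alt _ x y.
have br_addl u v w : br (u + v) w = br u w + br v w.
  by rewrite -[u]scale1r br_linl !scale1r.
have br_addr u v w : br w (u + v) = br w u + br w v.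
  by rewrite -[u]scale1r br_linr !scale1r.
have := br_alt (x + y).
rewrite br_addl !br_addr !br_alt add0r addr0 addrC => /eqP.
by rewrite addr_eq0 => /eqP.
Qed.

Section SymmetricForm.
Variables (F : fieldType) (V : vectType F) (S : V -> V -> F).
Hypothesis S_linl : forall a x y z, S (a *: x + y) z = a * S x z + S y z.
Hypothesis S_sym : forall x y, S x y = S y x.

Lemma S_linr a x y z : S z (a *: x + y) = a * S z x + S z y.
Proof. by rewrite S_sym S_linl !(S_sym z). Qed.

Lemma SsharpE x y : Ssharp S x y = S x y.
Proof. by rewrite linfunE_linear // => a u v; rewrite S_linr. Qed.

Lemma Ssharp_linear a x y : Ssharp S (a *: x + y) = a *: Ssharp S x + Ssharp S y.
Proof. by apply/lfunP => z; rewrite add_lfunE scale_lfunE !SsharpE S_linl. Qed.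

Definition Ssharp_lfun : 'Hom(V, dualv V) := linfun (Ssharp S).

Lemma Ssharp_lfunE x : Ssharp_lfun x = Ssharp S x.
Proof. by rewrite linfunE_linear //; apply: Ssharp_linear. Qed.

Lemma SsharpD x y : Ssharp S (x + y) = Ssharp S x + Ssharp S y.
Proof. by rewrite -!Ssharp_lfunE linearD. Qed.

Lemma SsharpN x : Ssharp S (- x) = - Ssharp S x.
Proof. by rewrite -!Ssharp_lfunE linearN. Qed.

Hypothesis S_nondeg : forall x, (forall y, S x y = 0) -> x = 0.

Lemma Ssharp_surj (xi : dualv V) : exists x, xi = Ssharp S x.
Proof.
have kerL : lker Ssharp_lfun == 0%VS.
  apply/lker0P => x y; rewrite !Ssharp_lfunE => Sxy.
  apply/eqP; rewrite -subr_eq0; apply/eqP/S_nondeg => z.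
  by rewrite -SsharpE SsharpD SsharpN Sxy subrr lfunE.
have imL : limg Ssharp_lfun = fullv.
  apply/eqP; rewrite eqEdim subvf limg_dim_eq ?(eqP kerL) ?capv0 //.
  have dim_dual : dim (dualv V) = dim V := muln1 (dim V).
  by rewrite !dimvf dim_dual leqnn.
have : xi \in limg Ssharp_lfun by rewrite imL memvf.
by case/memv_imgP => x _ ->; exists x; rewrite Ssharp_lfunE.
Qed.

End SymmetricForm.

Section InvariantForm.
Variables (F : fieldType) (V : vectType F) (br : V -> V -> V) (E : 'End(V)).
Variable S : V -> V -> F.
Hypothesis S_linl : forall a x y z, S (a *: x + y) z = a * S x z + S y z.
Hypothesis S_sym : forall x y, S x y = S y x.
Hypothesis br_linr : forall a x y z, br z (a *: x + y) = a *: br z x + br z y.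
Hypothesis S_invariant : forall x y z, S (br x y) z + S y (br x z) = 0.
Hypothesis S_E_selfadjoint : forall x y, S (E x) y = S x (E y).

Lemma coadE x (xi : dualv V) y : coad br x xi y = - xi (br x y).
Proof. by rewrite linfunE_linear // => a u v; rewrite br_linr linearP opprD scalerN. Qed.

Lemma coad_Ssharp u y : coad br u (Ssharp S y) = Ssharp S (br u y).
Proof.
apply/lfunP => z; rewrite coadE !SsharpE //.
by apply/eqP; rewrite eq_sym -addr_eq0 S_invariant.
Qed.

Lemma dualmap_Ssharp y : dualmap E (Ssharp S y) = Ssharp S (E y).
Proof. by apply/lfunP => z; rewrite comp_lfunE !SsharpE // S_E_selfadjoint. Qed.

Hypothesis br_anti : forall x y, br y x = - br x y.

Lemma coad_Ssharp_sub u v x y :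
  coad br u (Ssharp S y) - coad br v (Ssharp S x) = Ssharp S (br u y + br x v).
Proof. by rewrite !coad_Ssharp SsharpD // (br_anti x v) SsharpN // opprK. Qed.

End InvariantForm.

Theorem proposition6p7 (F : closedFieldType) (hchar : [pchar F] =i pred0)
  (V : vectType F) (br : V -> V -> V) (E : 'End(V)) (S : V -> V -> F)
  (hQ : is_quadratic_ENL br E S) (K : 'Hom(dualv V, V)) :
  is_ENE_relRB_coad br E K <-> is_RB0_ENL br E (fun x => K (Ssharp S x)).
Proof.
case: hQ => [[br_lie _] [S_linl S_sym S_nondeg S_inv S_E]].
have br_linr : forall a x y z, br z (a *: x + y) = a *: br z x + br z y.
  by case: br_lie.
have coad_sub := coad_Ssharp_sub S_linl S_sym br_linr S_inv (lie_bracket_anti br_lie).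
have dualmapE := dualmap_Ssharp S_linl S_sym S_E.
have Ssharp_onto := Ssharp_surj S_linl S_sym S_nondeg.
split=> [[K_rb K_E] | [B_rb B_E]]; split.
- by move=> x y; rewrite K_rb coad_sub.
- by move=> x; rewrite K_E dualmapE.
- move=> xi eta; have [x ->] := Ssharp_onto xi; have [y ->] := Ssharp_onto eta.
  by rewrite B_rb coad_sub.
- by move=> xi; have [x ->] := Ssharp_onto xi; rewrite B_E dualmapE.
Qed.
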